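(* Let $L$ be a linear subspace of $\mathbb{R}^d$ of dimension $l\ge 1$, let $B_L$ be a basis of $L^\perp$, let $k\ge 1$ and let $P$ be a set of $m=l-1+k$ points in $\mathbb{R}^d$ such that $P\cup B_L$ is in generic position. Consider the collections $\{h_1,\dots,h_k\}$ of $k$ parallel affine hyperplanes with a common normal vector lying in $L$ whose union contains $P$. Then the map $\{h_1,\dots,h_k\}\mapsto\{h_1\cap P,\dots,h_k\cap P\}$ is a bijection from the set of such collections onto the set of partitions of $P$ into $k$ nonempty sets (in particular, each $h_j$ contains a point of $P$ and the $h_j$ are distinct).
   Context: A finite set $S$ of points/vectors in $\mathbb{R}^d$ is in generic position if the $d|S|$ coordinates of its elements are algebraically independent over $\mathbb{Q}$ (no nonzero polynomial with integer coefficients vanishes on them). *)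

From HB Require Import structures.
From mathcomp Require Import all_boot all_order all_algebra.
From mathcomp Require Import boolp classical_sets functions reals.
From mathcomp Require Import mpoly.
Set Implicit Arguments. Unset Strict Implicit. Unset Printing Implicit Defensive.
Import Order.TTheory GRing.Theory Num.Theory.
Local Open Scope ring_scope.
Local Open Scope classical_set_scope.

Section Defs.
Variables (R : realType) (d : nat).

Definition dotv (u v : 'rV[R]_d) : R := (u *m v^T) 0 0.

Definition basis_of_perp (L : {vspace 'rV[R]_d}) (B : seq 'rV[R]_d) : Prop :=
  [/\ free B,
      (forall b, b \in B -> forall u, u \in L -> dotv u b = 0) &
      (forall v, (forall u, u \in L -> dotv u v = 0) -> v \in <<B>>%VS)].

(* algebraic independence over Q of a finite family of reals:
   no nonzero polynomial with integer coefficients vanishes on it *)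
Definition alg_indep (n : nat) (x : 'I_n -> R) : Prop :=
  forall p : mpoly.mpoly n int, p != 0 -> mpoly.mmap (intr : int -> R) x p != 0.

(* a finite family of points is in generic position: its d*|S| coordinates are
   algebraically independent over Q *)
Definition generic_position (S : seq 'rV[R]_d) : Prop :=
  alg_indep (fun i => mxvec (\matrix_(a < size S, j < d) (nth 0 S a) 0 j) 0 i).

Definition hyperplane (a : 'rV[R]_d) (c : R) : set 'rV[R]_d :=
  [set x | dotv a x = c].

Definition good_collection (L : {vspace 'rV[R]_d}) (k m : nat)
    (P : 'I_m -> 'rV[R]_d) (C : set (set 'rV[R]_d)) : Prop :=
  exists2 a : 'rV[R]_d, (a != 0) && (a \in L) &
    exists h : 'I_k -> set 'rV[R]_d,
      [/\ injective h, C = range h,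
          (forall j, exists c, h j = hyperplane a c) &
          (forall i, exists j, h j (P i))].

(* the trace map {h_1,...,h_k} |-> {h_1 ∩ P, ..., h_k ∩ P}, where subsets of
   P = {P i | i < m} are encoded by their index sets *)
Definition trace_of (m : nat) (P : 'I_m -> 'rV[R]_d) (h : set 'rV[R]_d)
  : {set 'I_m} := [set i | `[< h (P i) >]]%SET.

Definition traces (m : nat) (P : 'I_m -> 'rV[R]_d) (C : set (set 'rV[R]_d))
  : {set {set 'I_m}} :=
  [set B | `[< exists2 h, C h & B = trace_of P h >]]%SET.

Definition k_partition (m k : nat) (Q : {set {set 'I_m}}) : Prop :=
  finset.partition Q [set: 'I_m]%SET /\ #|Q| = k.

End Defs.

(* A good collection is determined by its normal a in L, with
   {h_j} = {a.x = a.P_i}, and its trace is the partition of P into the level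
   sets of x |-> a.P_x; so the claim is that every partition of P into k blocks
   is the level partition of exactly one direction of L.  Asking a to be
   constant on the c blocks of a partition imposes m - c linear conditions
   a.(P_x - P_rep(x)) = 0 on the l-dimensional space L.  By genericity these
   difference vectors, the basis B of the complement and standard basis
   vectors form an invertible matrix: its determinant is an integer polynomial
   in the coordinates which equals 1 at a suitable 0/1 point.  Hence for c < k
   only a = 0 survives, for c = k the solutions form a line (nonzero by a
   dimension count), and such an a separates distinct blocks, since merging
   two blocks would leave a nonzero solution with k - 1 blocks. *)

From HB Require Import structures.
From mathcomp Require Import all_boot all_order all_algebra.
From mathcomp Require Import boolp classical_sets functions reals.
From mathcomp Require Import mpoly zify.
Set Implicit Arguments. Unset Strict Implicit. Unset Printing Implicit Defensive.
Import Order.TTheory GRing.Theory Num.Theory.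
Local Open Scope ring_scope.

Section DotProduct.
Variables (R : realType) (d : nat).
Implicit Types (u v w : 'rV[R]_d).

Lemma dotvC u v : dotv u v = dotv v u.
Proof. by rewrite /dotv -[u *m v^T]trmxK trmx_mul trmxK mxE. Qed.

Lemma dotvBr u v w : dotv u (v - w) = dotv u v - dotv u w.
Proof. by rewrite /dotv (raddfB (@trmx _ _ _)) mulmxBr !mxE. Qed.

Lemma dotvBl u v w : dotv (u - v) w = dotv u w - dotv v w.
Proof. by rewrite /dotv mulmxBl !mxE. Qed.

Lemma dotvZl c u v : dotv (c *: u) v = c * dotv u v.
Proof. by rewrite /dotv -scalemxAl mxE. Qed.

Lemma dotv_mulmx_tr n (a : 'rV[R]_d) (w : 'I_n -> 'rV[R]_d) s :
  (a *m (\matrix_s w s)^T) 0 s = dotv a (w s).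
Proof. by rewrite /dotv !mxE; apply: eq_bigr => j _; rewrite !mxE. Qed.

Definition orthv n (w : 'I_n -> 'rV[R]_d) : {vspace 'rV[R]_d} :=
  lker (linfun (mulmxr (\matrix_s w s)^T)).

Lemma memv_orthv n (w : 'I_n -> 'rV[R]_d) a :
  (a \in orthv w) = [forall s, dotv a (w s) == 0].
Proof.
rewrite memv_ker lfunE /=; apply/eqP/forallP => [a0 s|a0].
  by rewrite -dotv_mulmx_tr a0 mxE.
by apply/rowP => s; rewrite dotv_mulmx_tr mxE; apply/eqP.
Qed.

Lemma dim_orthv n (w : 'I_n -> 'rV[R]_d) (V : {vspace 'rV[R]_d}) :
  (\dim V <= \dim (V :&: orthv w) + n)%N.
Proof.
rewrite -(limg_ker_dim (linfun (mulmxr (\matrix_s w s)^T)) V) leq_add2l.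
by rewrite (leq_trans (dimvS (subvf _))) // dimvf /dim /= mul1n.
Qed.

End DotProduct.

Lemma alg_indep_det_neq0 (R : realType) n d (x : 'I_n -> R)
    (Vp : 'M[{mpoly int[n]}]_d) (z : 'I_n -> int) :
  alg_indep x -> \det (map_mx (meval z) Vp) != 0 ->
  \det (map_mx (mmap intr x) Vp) != 0.
Proof.
move=> indep; rewrite !det_map_mx => nz; apply: indep.
by apply: contra nz => /eqP ->; rewrite raddf0.
Qed.

Section PairMatrix.
Variables (R : realType) (d m : nat) (P : 'I_m -> 'rV[R]_d) (B : seq 'rV[R]_d).
Local Notation S := ([seq P i | i <- enum 'I_m] ++ B).
Local Notation nB := (size B).
Hypothesis gen : generic_position S.

Lemma size_points : size S = (m + nB)%N.
Proof. by rewrite size_cat size_map size_enum_ord. Qed.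

Let posP i : 'I_(size S) := cast_ord (esym size_points) (lshift nB i).
Let posB t : 'I_(size S) := cast_ord (esym size_points) (rshift m t).

Let nth_posP i : nth 0 S (posP i) = P i.
Proof.
rewrite /= nth_cat size_map size_enum_ord ltn_ord (nth_map i) ?size_enum_ord //.
by rewrite nth_ord_enum.
Qed.

Let nth_posB t : nth 0 S (posB t) = nth 0 B t.
Proof. by rewrite /= nth_cat size_map size_enum_ord ltnNge leq_addr /= addKn. Qed.

Let eq_posP i i' : (posP i == posP i') = (i == i').
Proof. by rewrite -val_eqE. Qed.

Let eq_posB t t' : (posB t == posB t') = (t == t').
Proof. by rewrite -val_eqE /= eqn_add2l. Qed.

Let posB_neq_posP t i : (posB t == posP i) = false.
Proof. by rewrite -val_eqE /=; apply/negbTE; have := ltn_ord i; lia. Qed.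

Variables (nd : nat) (i j : 'I_nd -> 'I_m).
Hypotheses (i_inj : injective i) (j_neq_i : forall s s', j s != i s').

(* The rows are the vectors of [B], the differences [P (i s) - P (j s)], and
   standard basis vectors, each read through the valuation [v] of the points. *)
Definition pair_entry (T : pzRingType) (v : 'I_(size S) -> 'I_d -> T)
    (r c : 'I_d) : T :=
  match (insub (val r) : option 'I_nB) with
  | Some t => v (posB t) c
  | None => match (insub (r - nB)%N : option 'I_nd) with
    | Some s => v (posP (i s)) c - v (posP (j s)) c
    | None => (r == c)%:R
    end
  end.

Definition pair_mx (T : pzRingType) (v : 'I_(size S) -> 'I_d -> T) : 'M[T]_d :=
  \matrix_(r, c) pair_entry v r c.

Lemma pair_entry_map (T T' : pzRingType) (f : {rmorphism T -> T'}) v r c :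
  f (pair_entry v r c) = pair_entry (fun q c => f (v q c)) r c.
Proof.
by rewrite /pair_entry; case: insub => [t|] //; case: insub => [s|];
  rewrite ?rmorphB ?rmorph_nat.
Qed.

Lemma pair_entry_B T v (r c : 'I_d) (t : 'I_nB) : r = t :> nat ->
  pair_entry (T := T) v r c = v (posB t) c.
Proof.
rewrite /pair_entry => rt; case: insubP => [t' _ /= t't|].
  by congr v; congr posB; apply: val_inj; rewrite /= t't.
by rewrite /= rt ltn_ord.
Qed.

Lemma pair_entry_P T v (r c : 'I_d) (s : 'I_nd) : r = (nB + s)%N :> nat ->
  pair_entry (T := T) v r c = v (posP (i s)) c - v (posP (j s)) c.
Proof.
rewrite /pair_entry => rs.
case: insubP => [t _ /= rt|_]; first by have := ltn_ord t; lia.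
case: insubP => [s' _ /= s's|]; last by rewrite rs addKn ltn_ord.
by have -> : s' = s by apply: val_inj; rewrite /= s's rs addKn.
Qed.

Lemma pair_entry_id T v (r c : 'I_d) : (nB + nd <= r)%N ->
  pair_entry (T := T) v r c = (r == c)%:R.
Proof.
rewrite /pair_entry => rge.
case: insubP => [t _ /= rt|_]; first by have := ltn_ord t; lia.
by case: insubP => [s _ /= rs|//]; have := ltn_ord s; lia.
Qed.

(* The integer point at which the pair matrix is the identity: the t-th vector
   of [B] is e_t, [P (i s)] is e_(nB + s) and all other points are 0. *)
Definition pair_point : 'M[int]_(size S, d) := \matrix_(q, c)
  ([exists t : 'I_nB, (q == posB t) && (val t == val c)]
   || [exists s, (q == posP (i s)) && (nB + s == c)%N])%:R.

Lemma pair_mx_point : pair_mx (fun q c => pair_point q c) = 1.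
Proof.
have noB q (c : 'I_d) : (forall t, posB t != q) ->
    [exists t : 'I_nB, (q == posB t) && (val t == val c)] = false.
  by move=> qB; apply/negbTE/existsPn => t; rewrite eq_sym (negbTE (qB t)).
apply/matrixP => r c; rewrite !mxE.
case: (ltnP r nB) => [rB|Br].
  rewrite (pair_entry_B _ _ (t := Ordinal rB)) // mxE.
  have -> : [exists s, (posB (Ordinal rB) == posP (i s)) && (nB + s == c)%N]
    = false.
    by apply/negbTE/existsPn => s; rewrite posB_neq_posP.
  rewrite orbF -val_eqE /=; congr (_ %:R); congr nat_of_bool.
  apply/existsP/idP => [[t /andP[]]|rc].
    by rewrite eq_posB => /eqP <-.
  by exists (Ordinal rB); rewrite eqxx rc.
case: (ltnP (r - nB) nd) => [rs|sr]; last by rewrite pair_entry_id //; lia.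
rewrite (pair_entry_P _ _ (s := Ordinal rs)) /= ?subnKC // !mxE.
rewrite !noB => [|t|t]; try by rewrite posB_neq_posP.
have -> : [exists s, (posP (j (Ordinal rs)) == posP (i s)) && (nB + s == c)%N]
  = false.
  by apply/negbTE/existsPn => s; rewrite eq_posP (negbTE (j_neq_i _ _)).
rewrite subr0 -val_eqE /=; congr (_ %:R); congr nat_of_bool.
apply/existsP/idP => [[s /andP[]]|rc].
  by rewrite eq_posP => /eqP/i_inj <-; rewrite /= subnKC.
by exists (Ordinal rs); rewrite eqxx /= subnKC.
Qed.

Lemma pair_mx_unitmx : pair_mx (fun q c => nth 0 S q 0 c) \in unitmx.
Proof.
pose X := \matrix_(q < size S, c < d) nth 0 S q 0 c.
pose Vp := pair_mx (fun q c => 'X_(mxvec_index q c) : {mpoly int[size S * d]}).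
have mmapXE q c :
    mmap intr (fun k => mxvec X 0 k) 'X_(mxvec_index q c) = nth 0 S q 0 c.
  by rewrite mmapX mmap1U mxvecE mxE.
have -> : pair_mx (fun q c => nth 0 S q 0 c) =
          map_mx (mmap intr (fun k => mxvec X 0 k)) Vp.
  apply/matrixP => r c; rewrite !mxE pair_entry_map.
  by congr pair_entry; do 2!apply/funext => ?; exact/esym/mmapXE.
rewrite unitmxE unitfE.
apply: (alg_indep_det_neq0 (z := fun k => mxvec pair_point 0 k)) => //.
have mevalXE q c :
    meval (fun k => mxvec pair_point 0 k) 'X_(mxvec_index q c) = pair_point q c.
  by rewrite mevalXU mxvecE.
have -> : map_mx (meval (fun k => mxvec pair_point 0 k)) Vp =
          pair_mx (fun q c => pair_point q c).
  apply/matrixP => r c; rewrite !mxE pair_entry_map.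
  by congr pair_entry; do 2!apply/funext => ?; exact/mevalXE.
by rewrite pair_mx_point det1 oner_eq0.
Qed.

Lemma pairs_orth_eq0 a : (forall b, b \in B -> dotv a b = 0) ->
  (forall s, dotv a (P (i s)) = dotv a (P (j s))) ->
  (forall r : 'I_d, (nB + nd <= r)%N -> a 0 r = 0) -> a = 0.
Proof.
move=> aB aij a_tail; pose V := pair_mx (fun q c => nth 0 S q 0 c).
have Va : V *m a^T = 0.
  apply/matrixP => r z; rewrite [z]ord1 [RHS]mxE.
  have -> : (V *m a^T) r 0 = dotv a (row r V).
    by rewrite dotvC /dotv -row_mul [RHS]mxE.
  case: (ltnP r nB) => [rB|Br].
    have -> : row r V = nth 0 B (Ordinal rB).
      apply/rowP => c.
      by rewrite !mxE (pair_entry_B _ _ (t := Ordinal rB)) ?nth_posB.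
    by apply: aB; rewrite mem_nth.
  case: (ltnP (r - nB) nd) => [rs|sr].
    have -> : row r V = P (i (Ordinal rs)) - P (j (Ordinal rs)).
      apply/rowP => c; rewrite !mxE (pair_entry_P _ _ (s := Ordinal rs)).
        by rewrite !nth_posP.
      by rewrite /= subnKC.
    by rewrite dotvBr aij subrr.
  rewrite /dotv mxE big1 // => c _; rewrite !mxE pair_entry_id; last by lia.
  have [<-|_] := eqVneq r c; last by rewrite mulr0.
  by rewrite a_tail ?mul0r //; lia.
have := mulKmx pair_mx_unitmx a^T; rewrite Va mulmx0 => /(congr1 trmx).
by rewrite trmxK trmx0.
Qed.

End PairMatrix.

Section Partitions.
Variable T : finType.

Lemma im_pblock (Q : {set {set T}}) D :
  finset.partition Q D -> finset.pblock Q @: D = Q.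
Proof.
case/and3P=> /eqP covQ tiQ nQ0; apply/setP => X; apply/imsetP/idP.
  by case=> x Dx ->; rewrite pblock_mem ?covQ.
move=> QX; have /finset.set0Pn[x Xx] : X != finset.set0.
  by apply: contraNneq nQ0 => <-.
exists x; last by rewrite (def_pblock tiQ QX Xx).
by rewrite -covQ; apply/bigcupP; exists X.
Qed.

Lemma eq_preim_partition (rT rT' : eqType) (f : T -> rT) (g : T -> rT') D :
  (forall x y, (f x == f y) = (g x == g y)) ->
  preim_partition f D = preim_partition g D.
Proof. by move=> fg; apply: eq_imset => x; apply/setP => y; rewrite !inE fg. Qed.

Lemma card_preim_partition_le (rT : finType) (f : T -> rT) D :
  (#|preim_partition f D| <= #|f @: D|)%N.
Proof.
have -> : preim_partition f D = (fun v => [set y in D | v == f y]) @: (f @: D).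
  by rewrite -imset_comp.
exact: leq_imset_card.
Qed.

Lemma pblock_preim_partition (rT : eqType) (f : T -> rT) x y :
  (y \in finset.pblock (preim_partition f [set: T]) x) = (f x == f y).
Proof.
apply: pblock_equivalence_partition; rewrite ?inE //.
by split=> // /eqP ->.
Qed.

Lemma exists_level_enum (rT : eqType) (f : T -> rT) n :
  #|preim_partition f [set: T]| = n ->
  exists r : 'I_n -> T,
    (forall j j', f (r j) = f (r j') -> j = j') /\
    forall x, exists j, f (r j) = f x.
Proof.
set Q := preim_partition f _ => cardQ.
have partQ : finset.partition Q [set: T] := preim_partitionP f _.
have covQ : finset.cover Q = [set: T] by case/and3P: partQ => /eqP.
have trX := transversalP partQ; set X := transversal Q _ in trX.
have cardX : #|X| = n by rewrite (card_transversal trX).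
pose r j := enum_val (cast_ord (esym cardX) j).
have rX j : r j \in X := enum_valP _.
have same_level x y : f x = f y -> finset.pblock Q x = finset.pblock Q y.
  move=> fxy; apply/eqP; rewrite eq_pblock ?(partition_trivIset partQ) ?covQ //.
  by rewrite pblock_preim_partition fxy.
exists r; split => [j j' /same_level/(pblock_inj trX (rX j) (rX j'))|x].
  by move/enum_val_inj/cast_ord_inj.
have : finset.pblock Q x \in finset.pblock Q @: X.
  by rewrite (pblock_transversal trX) pblock_mem ?covQ.
case/imsetP => y yX Qxy; exists (cast_ord cardX (enum_rank_in yX y)).
rewrite /r cast_ordK enum_rankK_in //.
by apply/eqP; rewrite -pblock_preim_partition -/Q -Qxy mem_pblock covQ.
Qed.

End Partitions.

Section ClassRepresentatives.
Variables (m : nat) (T : finType) (f : 'I_m -> T).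

Definition class_rep x := odflt x [pick y | f y == f x].

Lemma f_class_rep x : f (class_rep x) = f x.
Proof.
by rewrite /class_rep; case: pickP => [y /eqP|/(_ x)] //=; rewrite eqxx.
Qed.

Lemma class_rep_eq x y : f x = f y -> class_rep x = class_rep y.
Proof. by rewrite /class_rep => ->; case: pickP => [//|/(_ y)]; rewrite eqxx. Qed.

Lemma class_repK x : class_rep (class_rep x) = class_rep x.
Proof. by apply: class_rep_eq; rewrite f_class_rep. Qed.

Definition nonreps := [set x | class_rep x != x].

Lemma class_rep_notin_nonreps x : class_rep x \notin nonreps.
Proof. by rewrite inE class_repK eqxx. Qed.

Lemma card_nonreps : #|nonreps| = (m - #|f @: [set: 'I_m]|)%N.
Proof.
have reps : ~: nonreps = class_rep @: [set: 'I_m].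
  apply/setP => x; rewrite !inE negbK; apply/eqP/imsetP => [<-|[y _ ->]].
    by exists x.
  exact: class_repK.
have -> : f @: [set: 'I_m] = f @: ~: nonreps.
  rewrite reps -imset_comp; apply: eq_imset => x.
  by rewrite /= f_class_rep.
rewrite cardsCs card_ord card_in_imset // => x y.
rewrite reps => /imsetP[x' _ ->] /imsetP[y' _ ->].
by rewrite !f_class_rep => /class_rep_eq ->.
Qed.

Lemma exists_nonrep_family nd : (nd <= #|nonreps|)%N ->
  exists i : 'I_nd -> 'I_m, injective i /\ forall s, i s \in nonreps.
Proof.
move=> ndN; exists (fun s => enum_val (widen_ord ndN s)); split => [s s'|s].
  by move/enum_val_inj/(congr1 val) => eq_s; apply: val_inj.
exact: enum_valP.
Qed.

End ClassRepresentatives.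

Section Levels.
Variables (R : realType) (d l k : nat) (L : {vspace 'rV[R]_d}).
Variables (B : seq 'rV[R]_d) (P : 'I_(l - 1 + k) -> 'rV[R]_d).
Local Notation m := (l - 1 + k)%N.
Hypotheses (l_gt0 : (0 < l)%N) (dimL : \dim L = l) (perpB : basis_of_perp L B).
Hypothesis gen : generic_position ([seq P i | i <- enum 'I_m] ++ B).

Local Notation phi a x := (dotv a (P x)).

Let orth_B a : a \in L -> forall b, b \in B -> dotv a b = 0.
Proof. by case: perpB => _ orthLB _ aL b bB; apply: orthLB. Qed.

Lemma dim_le_size_perp : (d <= size B + l)%N.
Proof.
pose w (s : 'I_(\dim L)) := (vbasis L)`_s.
suff sub : (fullv :&: orthv w <= <<B>>)%VS.
  rewrite -dimL; have := dim_orthv w fullv.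
  rewrite dimvf /dim /= mul1n => /leq_trans; apply.
  by rewrite leq_add2r (leq_trans (dimvS sub)) ?dim_span.
apply/subvP => v /memv_capP[_]; rewrite memv_orthv => /forallP vw.
case: perpB => _ _; apply => u uL.
suff /subvP/(_ u uL) : (L <= orthv (fun _ : 'I_1 => v))%VS.
  by rewrite memv_orthv => /forallP/(_ ord0)/eqP.
rewrite -(span_basis (vbasisP L)); apply/span_subvP => _ /(nthP 0)[s sL <-].
rewrite size_tuple in sL; rewrite memv_orthv; apply/forallP => _.
by rewrite dotvC (vw (Ordinal sL)).
Qed.

Section Fibres.
Variables (T : finType) (f : 'I_m -> T).
Local Notation nclasses := #|f @: [set: 'I_m]|.

Definition const_on_fibres a := forall x y, f x = f y -> phi a x = phi a y.

Lemma const_on_fibres_eq0 nd a : (nd + nclasses <= m)%N ->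
  a \in L -> const_on_fibres a ->
  (forall r : 'I_d, (size B + nd <= r)%N -> a 0 r = 0) -> a = 0.
Proof.
move=> nd_le aL a_const a_tail.
have [i [i_inj iN]] :
    exists i : 'I_nd -> 'I_m, injective i /\ forall s, i s \in nonreps f.
  by apply: exists_nonrep_family; rewrite card_nonreps; lia.
apply: (pairs_orth_eq0 gen i_inj (j := fun s => class_rep f (i s))) => //.
- move=> s s'; apply: contraNneq (class_rep_notin_nonreps f (i s)) => ->.
  exact: iN.
- exact: orth_B.
- by move=> s; apply: a_const; rewrite f_class_rep.
Qed.

Lemma const_on_fibres_lt_eq0 a : (nclasses < k)%N ->
  a \in L -> const_on_fibres a -> a = 0.
Proof.
move=> lt_k aL a_const; have dimB := dim_le_size_perp.
apply: (const_on_fibres_eq0 (nd := d - size B)) => // [|r]; first by lia.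
by have := ltn_ord r; lia.
Qed.

(* With one more linear condition, vanishing of the last coordinate, a
   solution is forced to be 0. *)
Lemma const_on_fibres_colinear a1 a2 : (nclasses <= k)%N ->
  a1 \in L -> a2 \in L -> a1 != 0 -> const_on_fibres a1 -> const_on_fibres a2 ->
  exists t, a2 = t *: a1.
Proof.
move=> le_k a1L a2L a1_neq0 a1_const a2_const.
have [d0|d_gt0] := posnP d.
  by case/eqP: a1_neq0; apply/rowP => r; have := ltn_ord r; lia.
have r0_lt : (d.-1 < d)%N by rewrite ltn_predL.
pose r0 := Ordinal r0_lt.
have key a : a \in L -> const_on_fibres a -> a 0 r0 = 0 -> a = 0.
  move=> aL a_const ar0; have dimB := dim_le_size_perp.
  apply: (const_on_fibres_eq0 (nd := d - size B - 1)) => // [|r r_ge].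
    by lia.
  suff -> : r = r0 by [].
  by apply: val_inj => /=; have := ltn_ord r; lia.
have a1r0 : a1 0 r0 != 0 by apply: contra a1_neq0 => /eqP/key ->.
have : a2 0 r0 *: a1 - a1 0 r0 *: a2 = 0.
  apply: key.
  - by rewrite memvB ?memvZ.
  - move=> x y fxy.
    by rewrite !dotvBl !dotvZl (a1_const _ _ fxy) (a2_const _ _ fxy).
  - by rewrite !mxE mulrC subrr.
move/eqP; rewrite subr_eq0 => /eqP E.
by exists ((a1 0 r0)^-1 * a2 0 r0); rewrite -scalerA E scalerA mulVf ?scale1r.
Qed.

Lemma exists_const_on_fibres : (k <= nclasses)%N ->
  exists2 a, (a != 0) && (a \in L) & const_on_fibres a.
Proof.
move=> ge_k; pose e (s : 'I_#|nonreps f|) := enum_val s.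
pose w s := P (e s) - P (class_rep f (e s)).
have : (L :&: orthv w)%VS != 0%VS.
  rewrite -dimv_eq0 -lt0n; have := card_nonreps f; have := dim_orthv w L; lia.
rewrite -vpick0; set a := vpick _ => a_neq0.
have /memv_capP[aL] := memv_pick (L :&: orthv w)%VS; rewrite -/a memv_orthv => aw.
have a_rep x : phi a x = phi a (class_rep f x).
  have [xN|] := boolP (x \in nonreps f); last by rewrite inE negbK => /eqP ->.
  have /eqP := forallP aw (enum_rank_in xN x).
  by rewrite /w dotvBr /e enum_rankK_in // => /eqP; rewrite subr_eq0 => /eqP.
exists a; first by rewrite a_neq0.
by move=> x y /class_rep_eq fxy; rewrite a_rep fxy -a_rep.
Qed.

End Fibres.

(* Merging the fibres of [x] and [y] leaves fewer than [k] classes. *)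
Lemma const_on_fibres_separates (T : finType) (f : 'I_m -> T) a x y :
  (#|f @: [set: 'I_m]| <= k)%N -> a != 0 -> a \in L -> const_on_fibres f a ->
  phi a x = phi a y -> f x = f y.
Proof.
move=> le_k a_neq0 aL a_const axy; apply: contraNeq a_neq0 => fxy.
pose f' z := if f z == f y then f x else f z.
apply/eqP; apply: (const_on_fibres_lt_eq0 (f := f')) => // [|z z'].
  suff sub : (f' @: [set: 'I_m] \subset (f @: [set: 'I_m]) :\ f y)%SET.
    apply: leq_ltn_trans (subset_leq_card sub) _.
    by rewrite (cardsD1 (f y)) imset_f ?inE // add1n in le_k.
  apply/fintype.subsetP => _ /imsetP[z _ ->]; rewrite /f' !inE.
  by case: ifP => [_|/negbT ->]; rewrite ?fxy imset_f ?inE.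
have fibre_y u : f u == f y -> phi a u = phi a x by move/eqP/a_const ->.
rewrite /f'; case: ifP => zy; case: ifP => z'y e.
- by rewrite !fibre_y.
- by rewrite fibre_y // (a_const _ _ e).
- by rewrite [RHS]fibre_y // (a_const _ _ e).
- exact: a_const.
Qed.

Definition hyps a : set (set 'rV[R]_d) := range (fun x => hyperplane a (phi a x)).

Definition levels a : {set {set 'I_m}} :=
  preim_partition (fun x => phi a x) [set: 'I_m].

Lemma pblock_levels a x y :
  (y \in finset.pblock (levels a) x) = (phi a x == phi a y).
Proof. exact: pblock_preim_partition. Qed.

Lemma trace_of_hyperplane a x :
  trace_of P (hyperplane a (phi a x)) = finset.pblock (levels a) x.
Proof.
by apply/setP => y; rewrite inE pblock_levels; apply/asboolP/eqP => /esym.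
Qed.

Lemma traces_hyps a : traces P (hyps a) = levels a.
Proof.
rewrite -[RHS](im_pblock (preim_partitionP _ _)); apply/setP => X; rewrite inE.
apply/asboolP/imsetP => [[_ [x _ <-] ->]|[x _ ->]].
  by exists x; rewrite ?trace_of_hyperplane.
by exists (hyperplane a (phi a x)); [exists x | rewrite trace_of_hyperplane].
Qed.

Lemma hyps_scale a t : t != 0 -> hyps (t *: a) = hyps a.
Proof.
move=> t_neq0; rewrite /hyps (_ : (fun x => _) = fun x => hyperplane a (phi a x)) //.
apply/funext => x; rewrite /hyperplane.
by apply/seteqP; split => z /=; rewrite !dotvZl; [apply: mulfI | move->].
Qed.

Lemma const_on_pblock_levels a : const_on_fibres (finset.pblock (levels a)) a.
Proof.
by move=> x y xy; apply/eqP; rewrite -pblock_levels xy pblock_levels.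
Qed.

Lemma card_levels_ge a : a != 0 -> a \in L -> (k <= #|levels a|)%N.
Proof.
move=> a_neq0 aL; rewrite leqNgt; apply: contra a_neq0 => lt_k; apply/eqP.
apply: (const_on_fibres_lt_eq0 (f := finset.pblock (levels a))) => //.
  by rewrite im_pblock ?preim_partitionP.
exact: const_on_pblock_levels.
Qed.

Lemma levels_colinear a1 a2 : a1 != 0 -> a2 != 0 -> a1 \in L -> a2 \in L ->
  (#|levels a1| <= k)%N -> levels a1 = levels a2 ->
  exists2 t, t != 0 & a2 = t *: a1.
Proof.
move=> a1_neq0 a2_neq0 a1L a2L le_k eq12.
have [t a2E] : exists t, a2 = t *: a1.
  apply: (const_on_fibres_colinear (f := finset.pblock (levels a1))) => //.
  - by rewrite im_pblock ?preim_partitionP.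
  - exact: const_on_pblock_levels.
  - by rewrite eq12; apply: const_on_pblock_levels.
by exists t => //; apply: contra a2_neq0 => /eqP t0; rewrite a2E t0 scale0r.
Qed.

Lemma exists_levels Q : finset.partition Q [set: 'I_m] -> #|Q| = k ->
  exists2 a, (a != 0) && (a \in L) & levels a = Q.
Proof.
move=> partQ cardQ; have imQ := im_pblock partQ.
have [|a aL a_const] := exists_const_on_fibres (f := finset.pblock Q).
  by rewrite imQ cardQ.
exists a => //; rewrite -[RHS](preim_partition_pblock partQ).
apply: eq_preim_partition => x y; apply/eqP/eqP => [|/a_const //].
case/andP: aL => a_neq0 aL.
by apply: const_on_fibres_separates; rewrite ?imQ ?cardQ.
Qed.

Lemma good_hyps a : (a != 0) && (a \in L) -> #|levels a| = k ->
  good_collection L k P (hyps a).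
Proof.
move=> aL card_a; have [r [r_inj r_onto]] := exists_level_enum card_a.
exists a => //; exists (fun j => hyperplane a (phi a (r j))); split.
- move=> j j' hj; apply: r_inj.
  by have : hyperplane a (phi a (r j')) (P (r j)) by rewrite -hj /hyperplane.
- rewrite /hyps; apply/seteqP; split => _ [x _ <-]; last by exists (r x).
  by have [j rj] := r_onto x; exists j; rewrite ?rj.
- by move=> j; exists (phi a (r j)).
- by move=> x; have [j rj] := r_onto x; exists j; rewrite /hyperplane /= rj.
Qed.

Lemma good_collectionE C : good_collection L k P C ->
  exists2 a, (a != 0) && (a \in L) & C = hyps a /\ #|levels a| = k.
Proof.
case=> a aL [h [h_inj -> /choice[c hc] /choice[g hg]]].
have /andP[a_neq0 a_inL] := aL.
have phi_g x : phi a x = c (g x) by have := hg x; rewrite hc.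
have c_inj : injective c by move=> j j' cj; apply: h_inj; rewrite !hc cj.
have levels_g : levels a = preim_partition g [set: 'I_m].
  by apply: eq_preim_partition => x y; rewrite !phi_g (inj_eq c_inj).
have le_g : (#|levels a| <= #|g @: [set: 'I_m]|)%N.
  by rewrite levels_g card_preim_partition_le.
have g_le : (#|g @: [set: 'I_m]| <= k)%N.
  by rewrite (leq_trans (max_card _)) ?card_ord.
have ge_k := card_levels_ge a_neq0 a_inL.
have g_onto j : exists x, g x = j.
  have : g @: [set: 'I_m] = [set: 'I_k].
    apply/eqP; rewrite eqEcard finset.subsetT cardsT card_ord.
    exact: leq_trans ge_k le_g.
  by move/setP/(_ j); rewrite !inE => /imsetP[x _ ->]; exists x.
exists a => //; split; last by lia.
apply/seteqP; split => _ [j _ <-]; last by exists (g j) => //; rewrite hc phi_g.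
by have [x gx] := g_onto j; exists x => //; rewrite hc phi_g gx.
Qed.

End Levels.

Local Open Scope classical_set_scope.

Theorem lemma3p1 (R : realType) (d l k : nat) (L : {vspace 'rV[R]_d})
    (B : seq 'rV[R]_d) (P : 'I_(l - 1 + k) -> 'rV[R]_d) :
  (1 <= l)%N -> \dim L = l -> basis_of_perp L B -> (1 <= k)%N ->
  injective P ->
  generic_position ([seq P i | i <- enum 'I_(l - 1 + k)] ++ B) ->
  set_bij [set C | good_collection L k P C]
          [set Q | k_partition k Q]
          (traces P).
Proof.
move=> l_gt0 dimL perpB _ _ gen.
have goodE := good_collectionE l_gt0 dimL perpB gen.
split.
- move=> C /goodE[a _ [-> card_a]].
  by rewrite /= traces_hyps; split; first exact: preim_partitionP.
- move=> C1 C2; rewrite !in_setE.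
  move=> /goodE[a1 /andP[a1_neq0 a1L] [-> card1]].
  move=> /goodE[a2 /andP[a2_neq0 a2L] [-> _]].
  rewrite !traces_hyps => eq12.
  have [t t_neq0 ->] := levels_colinear l_gt0 dimL perpB gen
    a1_neq0 a2_neq0 a1L a2L (eq_leq card1) eq12.
  by rewrite hyps_scale.
- move=> Q [partQ cardQ].
  have [a aL levelsQ] := exists_levels l_gt0 dimL perpB gen partQ cardQ.
  exists (hyps P a); last by rewrite traces_hyps.
  by apply: good_hyps; rewrite ?levelsQ.
Qed.
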